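(* Let $Q$ be an automorphic loop satisfying condition (C) (for all $a,b\in Q$: $a(ab)=(ba)a$ if and only if $ab=ba$), and let $x,y\in Q$. If $x(xy)=(yx)x$, then the subloop $\langle x,y\rangle$ generated by $x$ and $y$ is commutative.
   Context: A loop is a set with a binary operation in which all equations $ax=b$, $ya=b$ are uniquely solvable and which has a two-sided identity. For $a\in L$, $R_a:x\mapsto xa$, $L_a:x\mapsto ax$; the inner mapping group is the stabilizer of the identity in the group generated by all $R_a,L_a$. A loop is automorphic if every inner mapping is an automorphism. The subloop generated by a subset $S$ is the intersection of all subloops containing $S$. *)

Section Loops.
Variable T : Type.
Variable mul : T -> T -> T.
Variable e : T.

Definition is_loop : Prop :=
  (forall a b : T, exists! x : T, mul a x = b) /\
  (forall a b : T, exists! y : T, mul y a = b) /\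
  (forall x : T, mul e x = x /\ mul x e = x).

(* A permutation is recorded
   together with its inverse: [mlt f g] means f is in the group and g is
   its inverse map. *)
Inductive mlt : (T -> T) -> (T -> T) -> Prop :=
  | mlt_id : mlt (fun x => x) (fun x => x)
  | mlt_R : forall (a : T) (g : T -> T),
      (forall x, g (mul x a) = x) -> (forall x, mul (g x) a = x) ->
      mlt (fun x => mul x a) g
  | mlt_L : forall (a : T) (g : T -> T),
      (forall x, g (mul a x) = x) -> (forall x, mul a (g x) = x) ->
      mlt (fun x => mul a x) g
  | mlt_comp : forall f g f' g', mlt f g -> mlt f' g' ->
      mlt (fun x => f (f' x)) (fun x => g' (g x))
  | mlt_inv : forall f g, mlt f g -> mlt g f.

Definition inner_mapping (f : T -> T) : Prop :=
  (exists g, mlt f g) /\ f e = e.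

(* Automorphic loop: every inner mapping is an automorphism
   (inner mappings are bijections, so it suffices that they are
   multiplicative). *)
Definition automorphic : Prop :=
  forall f : T -> T, inner_mapping f ->
    forall x y : T, f (mul x y) = mul (f x) (f y).

Definition subloop (S : T -> Prop) : Prop :=
  S e /\
  (forall a b, S a -> S b -> S (mul a b)) /\
  (forall a b x, S a -> S b -> mul a x = b -> S x) /\
  (forall a b y, S a -> S b -> mul y a = b -> S y).

Definition gen2 (x y : T) (z : T) : Prop :=
  forall S : T -> Prop, subloop S -> S x -> S y -> S z.

Definition condC : Prop :=
  forall a b : T, mul a (mul a b) = mul (mul b a) a <-> mul a b = mul b a.

End Loops.
Arguments is_loop {T}. Arguments automorphic {T}. Arguments condC {T}. Arguments gen2 {T}. Arguments subloop {T}. Arguments inner_mapping {T}. Arguments mlt {T}.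

(* In an automorphic loop the inner mapping z |-> u \ (z u) is an automorphism,
   so its fixed points, i.e. the elements commuting with u, form a subloop.
   By (C) the hypothesis says that x and y commute.  Then every u in <x,y>
   commutes with x and with y, since both centralizers are subloops containing
   x and y; hence the centralizer of u contains x and y, and with them all of
   <x,y>. *)

From Stdlib Require Import ClassicalEpsilon.

Section Loop.
Variables (T : Type) (mul : T -> T -> T) (e : T).
Hypothesis Hloop : is_loop mul e.

Lemma mul_left_cancel (a x x' : T) : mul a x = mul a x' -> x = x'.
Proof.
  intro H. destruct Hloop as [Hl _].
  destruct (Hl a (mul a x)) as [w [_ Hw]].
  rewrite <- (Hw x eq_refl). apply Hw. symmetry; exact H.
Qed.

Lemma mul_right_cancel (a y y' : T) : mul y a = mul y' a -> y = y'.
Proof.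
  intro H. destruct Hloop as [_ [Hr _]].
  destruct (Hr a (mul y a)) as [w [_ Hw]].
  rewrite <- (Hw y eq_refl). apply Hw. symmetry; exact H.
Qed.

Lemma left_division (a : T) : exists g : T -> T,
  (forall z, g (mul a z) = z) /\ (forall z, mul a (g z) = z).
Proof.
  destruct Hloop as [Hl _].
  destruct (choice (fun b x => mul a x = b)) as [g Hg].
  { intro b. destruct (Hl a b) as [x [Hx _]]. exists x; exact Hx. }
  exists g; split; [|exact Hg].
  intro z. apply (mul_left_cancel a). apply Hg.
Qed.

Lemma right_division (a : T) : exists g : T -> T,
  (forall z, g (mul z a) = z) /\ (forall z, mul (g z) a = z).
Proof.
  destruct Hloop as [_ [Hr _]].
  destruct (choice (fun b y => mul y a = b)) as [g Hg].
  { intro b. destruct (Hr a b) as [y [Hy _]]. exists y; exact Hy. }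
  exists g; split; [|exact Hg].
  intro z. apply (mul_right_cancel a). apply Hg.
Qed.

Lemma subloop_ext (P Q : T -> Prop) :
  (forall z, P z <-> Q z) -> subloop mul e P -> subloop mul e Q.
Proof.
  intros HPQ [He [Hmul [Hldiv Hrdiv]]].
  split; [| split; [| split]].
  - apply HPQ, He.
  - intros a b Ha Hb. apply HPQ, Hmul; apply HPQ; assumption.
  - intros a b x Ha Hb Hx. apply HPQ, (Hldiv a b); [apply HPQ..|]; assumption.
  - intros a b y Ha Hb Hy. apply HPQ, (Hrdiv a b); [apply HPQ..|]; assumption.
Qed.

Lemma fixed_points_subloop (f : T -> T) :
  f e = e -> (forall a b, f (mul a b) = mul (f a) (f b)) ->
  subloop mul e (fun z => f z = z).
Proof.
  intros Hfe Hfmul.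
  split; [exact Hfe | split; [| split]].
  - intros a b Ha Hb. rewrite Hfmul, Ha, Hb. reflexivity.
  - intros a b x Ha Hb Hx. apply (mul_left_cancel a).
    rewrite <- Ha at 1. rewrite <- Hfmul, Hx. exact Hb.
  - intros a b y Ha Hb Hy. apply (mul_right_cancel a).
    rewrite <- Ha at 1. rewrite <- Hfmul, Hy. exact Hb.
Qed.

Lemma centralizer_fixed_by_inner_mapping (u : T) : exists f : T -> T,
  inner_mapping mul e f /\ forall z, f z = z <-> mul z u = mul u z.
Proof.
  destruct (left_division u) as [Li [Li_mul mul_Li]].
  destruct (right_division u) as [Ri [Ri_mul mul_Ri]].
  destruct Hloop as [_ [_ Hid]].
  exists (fun z => Li (mul z u)); split; [split|].
  - exists (fun z => Ri (mul u z)).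
    exact (mlt_comp T mul _ _ _ _ (mlt_inv T mul _ _ (mlt_L T mul u Li Li_mul mul_Li))
             (mlt_R T mul u Ri Ri_mul mul_Ri)).
  - rewrite (proj1 (Hid u)), <- (proj2 (Hid u)) at 1. apply Li_mul.
  - intro z; split; intro Hz.
    + rewrite <- Hz at 2. symmetry. apply mul_Li.
    + rewrite Hz. apply Li_mul.
Qed.

Hypothesis Haut : automorphic mul e.

Lemma centralizer_subloop (u : T) : subloop mul e (fun z => mul z u = mul u z).
Proof.
  destruct (centralizer_fixed_by_inner_mapping u) as [f [Hf Hfix]].
  apply (subloop_ext (fun z => f z = z)); [exact Hfix |].
  exact (fixed_points_subloop f (proj2 Hf) (Haut f Hf)).
Qed.

Lemma gen2_commutative (x y : T) : mul x y = mul y x ->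
  forall u v, gen2 mul e x y u -> gen2 mul e x y v -> mul u v = mul v u.
Proof.
  intros Hxy u v Hu Hv.
  assert (Hux : mul u x = mul x u)
    by (apply (Hu _ (centralizer_subloop x)); [reflexivity | symmetry; exact Hxy]).
  assert (Huy : mul u y = mul y u)
    by (apply (Hu _ (centralizer_subloop y)); [exact Hxy | reflexivity]).
  symmetry. apply (Hv _ (centralizer_subloop u)); symmetry; assumption.
Qed.

End Loop.

Theorem lemma3p3 (T : Type) (mul : T -> T -> T) (e : T)
  (Hloop : is_loop mul e) (Haut : automorphic mul e) (HC : condC mul)
  (x y : T) (Hxy : mul x (mul x y) = mul (mul y x) x) :
  forall u v : T, gen2 mul e x y u -> gen2 mul e x y v -> mul u v = mul v u.
Proof.
  apply (gen2_commutative T mul e Hloop Haut).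
  apply (HC x y). exact Hxy.
Qed.
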